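(* Let $f:\mathbb{N}\to\mathbb{R}$ with $f(1)=1$, and suppose $|f|$ is submultiplicative, i.e. $|f(m)|\,|f(n)| \geq |f(mn)|$ for all $m,n\in\mathbb{N}$. Assume there exist $C>0$ and $\gamma\in\mathbb{R}$ such that $|f(n)| \leq C n^\gamma$ for all $n \geq 2$. Then $$|f^{-1}(n)| \leq H(n)\, C^{\Omega(n)} n^{\gamma} \leq C^{\Omega(n)} n^{\gamma+\rho}, \quad n\geq 2,$$ where $\rho=1.72865\dots$ is the unique root $s>1$ of $\zeta(s)=2$.
   Context: The Dirichlet convolution is $(f\ast g)(n)=\sum_{d\mid n} f(n/d)g(d)$; for $f(1)\neq0$, $f^{-1}$ denotes the Dirichlet inverse, the unique arithmetic function with $f\ast f^{-1}=f^{-1}\ast f=\varepsilon$, where $\varepsilon(1)=1$ and $\varepsilon(n)=0$ for $n\ge2$. $\Omega(n)$ is the number of prime factors of $n$ counted with multiplicity. $H(n)$ is the number of ordered factorizations of $n$ into factors $\ge 2$, i.e. $H(n)=\sum_{k\ge1}\#\{(d_1,\dots,d_k): d_1\cdots d_k=n,\ d_i\ge2\}$. $\zeta$ is the Riemann zeta function. *)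

From HB Require Import structures.
From mathcomp Require Import all_boot all_order all_algebra.
From mathcomp Require Import all_classical all_reals all_analysis.
Set Implicit Arguments. Unset Strict Implicit. Unset Printing Implicit Defensive.
Import Order.TTheory GRing.Theory Num.Theory.
Import numFieldNormedType.Exports.
Local Open Scope ring_scope.

(* Arithmetic functions are maps nat -> R; only values at n >= 1 matter. *)

Definition dconv (R : realType) (f g : nat -> R) (n : nat) : R :=
  \sum_(d <- divisors n) f (n %/ d)%N * g d.

Definition deps (R : realType) (n : nat) : R := (n == 1%N)%:R.

Definition is_dirichlet_inverse (R : realType) (f g : nat -> R) : Prop :=
  forall n : nat, (0 < n)%N ->
    dconv f g n = deps R n /\ dconv g f n = deps R n.

Definition primeOmega (n : nat) : nat := (\sum_(p <- primes n) logn p n)%N.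

(* H(n): number of ordered factorizations n = d_1 ... d_k, k >= 1, d_i >= 2.
   Since each d_i >= 2 divides n, necessarily k <= n and d_i <= n, so the
   sum over k may be restricted to 1 <= k <= n and the factors to 'I_n.+1
   (all other terms are 0; for n = 0 this gives 0, irrelevant here). *)
Definition ordfact (n : nat) : nat :=
  (\sum_(1 <= k < n.+1)
     #|[pred t : k.-tuple 'I_n.+1 |
         all (fun d : 'I_n.+1 => (1 < d)%N) t &&
         ((\prod_(d <- t) (d : nat))%N == n)]|)%N.

Definition zeta_partial (R : realType) (s : R) (N : nat) : R :=
  \sum_(1 <= k < N) (k%:R `^ (- s)).

Definition zeta_eq2 (R : realType) (s : R) : Prop :=
  (zeta_partial s @ \oo --> (2 : R))%classic.

From HB Require Import structures.
From mathcomp Require Import all_boot all_order all_algebra.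
From mathcomp Require Import all_classical all_reals all_analysis.
From mathcomp Require Import lra.
Import Order.TTheory GRing.Theory Num.Theory.
Import numFieldNormedType.Exports.

(* Since f(1) = 1, the inverse g satisfies g(n) = - sum_{d | n, d > 1} g(n/d) f(d).
   Submultiplicativity and the bound at primes give |f(d)| <= C^Omega(d) d^gamma,
   and Omega is additive, so strong induction yields |g(n)| <= H(n) C^Omega(n) n^gamma,
   because H obeys the same recursion H(n) = sum_{d | n, d > 1} H(n/d) (split off the
   first factor).  The same induction gives H(n) <= n^rho, as
   sum_{d | n, d > 1} d^-rho <= zeta(rho) - 1 = 1. *)

Lemma big_uniq_index_iota {R : Type} {idx : R} {op : Monoid.com_law idx}
    (s : seq nat) (a b : nat) (P : pred nat) (F : nat -> R) :
  uniq s -> {subset s <= index_iota a b} ->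
  \big[op/idx]_(i <- s | P i) F i
    = \big[op/idx]_(a <= i < b | (i \in s) && P i) F i.
Proof.
move=> s_uniq s_sub; rewrite -big_filter_cond; apply: perm_big.
apply: uniq_perm => [||i]; rewrite ?filter_uniq ?iota_uniq //.
by rewrite mem_filter; case: (boolP (i \in s)) => // /s_sub.
Qed.

Lemma divisors_sub_iota {n : nat} :
  (0 < n)%N -> {subset divisors n <= index_iota 1 n.+1}.
Proof.
move=> n_gt0 d; rewrite -dvdn_divisors // mem_index_iota ltnS => d_dvd.
by rewrite (dvdn_gt0 n_gt0 d_dvd) dvdn_leq.
Qed.

Lemma divisors_cofactor {n d : nat} : (0 < n)%N -> d \in divisors n -> (1 < d)%N ->
  [/\ (n %/ d * d)%N = n, (0 < n %/ d)%N & (n %/ d < n)%N].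
Proof.
move=> n_gt0; rewrite -dvdn_divisors // => d_dvd d_gt1.
have d_gt0 : (0 < d)%N by exact: ltnW.
by rewrite divnK // divn_gt0 // dvdn_leq // ltn_Pdiv.
Qed.

Lemma card_tuple_cons (T : finType) k (P : pred (k.+1.-tuple T)) :
  #|P| = (\sum_(x : T) #|[pred t : k.-tuple T | P [tuple of x :: t]]|)%N.
Proof.
rewrite -sum1_card (partition_big (@thead _ _) predT) //=.
apply: eq_bigr => x _; rewrite -sum1_card.
rewrite (reindex (fun t : k.-tuple T => [tuple of x :: t])) /=.
  by apply: eq_bigl => t; rewrite /= eqxx andbT.
exists (fun t : k.+1.-tuple T => [tuple of behead t]) => [t _|t /andP [_ /eqP <-]].
  exact: val_inj.
by rewrite -tuple_eta.
Qed.

Lemma card_tuple0 (T : finType) (P : pred (0.-tuple T)) : #|P| = P [tuple].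
Proof.
rewrite -sum1_card big_mkcond /= (eq_bigr (fun=> nat_of_bool (P [tuple]))) => [|t _].
  by rewrite sum_nat_const card_tuple expn0 mul1n.
by rewrite [t]tuple0 unfold_in; case: (P _).
Qed.

(* Ordered factorizations of m into exactly k factors >= 2, counted by their first factor. *)
Fixpoint nfactor (k m : nat) : nat :=
  if k is k'.+1 then (\sum_(d <- divisors m | 1 < d) nfactor k' (m %/ d))%N
  else (m == 1)%N.

(* H(m), except that Hfact 1 = 1 counts the empty factorization while ordfact 1 = 0. *)
Definition Hfact (m : nat) : nat := (\sum_(0 <= k < m.+1) nfactor k m)%N.

Lemma nfactor_small k m : (m < 2 ^ k)%N -> nfactor k m = 0%N.
Proof.
elim: k m => [|k IH] m /=; first by rewrite ltnS leqn0 => /eqP ->.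
rewrite expnS => m_small; rewrite big1_seq // => d /andP [d_gt1 _]; apply: IH.
rewrite ltn_divLR ?(ltnW d_gt1) //; apply: leq_trans m_small _.
by rewrite mulnC leq_mul2l d_gt1 orbT.
Qed.

Lemma Hfact_widen m b : (m < b)%N -> (\sum_(0 <= k < b) nfactor k m)%N = Hfact m.
Proof.
move=> m_lt_b; rewrite /Hfact (@big_cat_nat _ _ _ m.+1) //=.
rewrite [X in (_ + X)%N]big1_seq ?addn0 // => k; rewrite mem_index_iota.
by case/and3P=> _ m_lt_k _; rewrite nfactor_small // (ltn_trans m_lt_k) // ltn_expl.
Qed.

Lemma Hfact1 : Hfact 1 = 1%N.
Proof. by rewrite /Hfact !big_nat_recl // big_geq //= big_mkcond unlock. Qed.

Lemma Hfact_rec n : (2 <= n)%N ->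
  Hfact n = (\sum_(d <- divisors n | 1 < d) Hfact (n %/ d))%N.
Proof.
move=> n_ge2; have n_gt0 : (0 < n)%N by exact: ltnW.
rewrite {1}/Hfact big_nat_recl //= (gtn_eqF n_ge2) add0n exchange_big /=.
rewrite big_seq_cond [RHS]big_seq_cond; apply: eq_bigr => d /andP [d_div d_gt1].
by case: (divisors_cofactor n_gt0 d_div d_gt1) => _ _ /Hfact_widen.
Qed.

Lemma card_nfactor N k m : (0 < m < N)%N ->
  #|[pred t : k.-tuple 'I_N |
       all (fun d : 'I_N => 1 < d)%N t && ((\prod_(d <- t) (d : nat))%N == m)]|
  = nfactor k m.
Proof.
elim: k m => [|k IH] m /andP [m_gt0 m_lt_N].
  by rewrite card_tuple0 /= big_nil eq_sym.
rewrite card_tuple_cons /= (big_uniq_index_iota _ 0 N _ _ (divisors_uniq m)); last first.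
  move=> d /(divisors_sub_iota m_gt0); rewrite !mem_index_iota ltnS.
  by case/andP=> _ d_le_m; apply: leq_ltn_trans d_le_m m_lt_N.
rewrite big_mkord [RHS]big_mkcond /=; apply: eq_bigr => x _.
have [/andP [x_div x_gt1]|x_bad] := boolP ((nat_of_ord x \in divisors m) && (1 < x)%N).
  have [mE q_gt0 q_lt_m] := divisors_cofactor m_gt0 x_div x_gt1.
  rewrite -IH ?q_gt0 ?(ltn_trans q_lt_m) //; apply: eq_card => t.
  rewrite !inE big_cons x_gt1 -[X in (_ == X)%N]mE [X in (_ == X)%N]mulnC.
  by rewrite eqn_pmul2l // ltnW.
apply: eq_card0 => t; rewrite !inE big_cons; apply/negbTE.
apply: contra x_bad => /andP [/andP [x_gt1 _] /eqP mE].
by rewrite x_gt1 andbT -dvdn_divisors // -mE dvdn_mulr.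
Qed.

Lemma ordfactE n : (2 <= n)%N -> ordfact n = Hfact n.
Proof.
move=> n_ge2; rewrite /ordfact /Hfact [RHS]big_ltn //= (gtn_eqF n_ge2) add0n.
by apply: eq_bigr => k _; apply: card_nfactor; rewrite ltnSn andbT ltnW.
Qed.

Lemma primeOmega_ord n b : (0 < n)%N -> (n < b)%N ->
  primeOmega n = (\sum_(p < b) logn p n)%N.
Proof.
move=> n_gt0 n_lt_b; rewrite /primeOmega.
rewrite (big_uniq_index_iota _ 0 b _ _ (primes_uniq n)) => [|p].
  rewrite big_mkord big_mkcond; apply: eq_bigr => p _.
  by rewrite andbT -logn_gt0; case: posnP.
rewrite mem_primes mem_index_iota => /and3P [_ _ p_dvd].
exact: leq_ltn_trans (dvdn_leq n_gt0 p_dvd) n_lt_b.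
Qed.

Lemma primeOmegaM a b : (0 < a)%N -> (0 < b)%N ->
  primeOmega (a * b) = (primeOmega a + primeOmega b)%N.
Proof.
move=> a_gt0 b_gt0; have ab_gt0 : (0 < a * b)%N by rewrite muln_gt0 a_gt0.
rewrite !(@primeOmega_ord _ (a * b).+1) ?ltnS ?leq_pmulr ?leq_pmull //.
by rewrite -big_split; apply: eq_bigr => p _; apply: lognM.
Qed.

Lemma primeOmega_prime {p : nat} : prime p -> primeOmega p = 1%N.
Proof. by move=> p_prime; rewrite /primeOmega primes_prime // big_seq1 logn_prime ?eqxx. Qed.

Lemma primeOmega1 : primeOmega 1 = 0%N.
Proof. by rewrite /primeOmega big_nil. Qed.

Local Open Scope ring_scope.

Section SubmultiplicativeInverse.
Variables (R : realType) (f g : nat -> R) (C gamma : R).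
Hypothesis f1 : f 1%N = 1.
Hypothesis f_submul : forall m n : nat, (0 < m)%N -> (0 < n)%N ->
  `|f (m * n)%N| <= `|f m| * `|f n|.
Hypothesis f_prime : forall p : nat, prime p -> `|f p| <= C * p%:R `^ gamma.

Lemma norm_submul_le n : (0 < n)%N -> `|f n| <= C ^+ primeOmega n * n%:R `^ gamma.
Proof.
elim/ltn_ind: n => n IH n_gt0; have [n_le1|n_gt1] := leqP n 1.
  have -> : n = 1%N by apply/eqP; rewrite eqn_leq n_le1.
  by rewrite f1 primeOmega1 powR1 normr1 mul1r.
have p_prime := pdiv_prime n_gt1.
have p_div : pdiv n \in divisors n by rewrite -dvdn_divisors ?pdiv_dvd.
have [nE q_gt0 q_lt_n] := divisors_cofactor n_gt0 p_div (prime_gt1 p_prime).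
set p := pdiv n in p_prime nE q_gt0 q_lt_n *.
set q := (n %/ p)%N in nE q_gt0 q_lt_n *.
rewrite -nE primeOmegaM ?(prime_gt0 p_prime) // (primeOmega_prime p_prime).
rewrite exprD expr1 natrM powRM //.
apply: (le_trans (f_submul _ _ q_gt0 (prime_gt0 p_prime))).
by rewrite mulrACA; apply: ler_pM => //; [exact: IH | exact: f_prime].
Qed.

Hypothesis g_inv : forall n : nat, (0 < n)%N -> dconv g f n = deps R n.

Lemma dirichlet_inv1 : g 1%N = 1.
Proof.
have := g_inv 1 isT.
by rewrite /dconv /deps (_ : divisors 1 = [:: 1%N]) // big_seq1 divn1 f1 mulr1.
Qed.

Lemma dirichlet_inv_rec n : (2 <= n)%N ->
  g n = - \sum_(d <- divisors n | (1 < d)%N) g (n %/ d)%N * f d.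
Proof.
move=> n_ge2; have n_gt0 := ltnW n_ge2.
have := g_inv n n_gt0; rewrite /dconv /deps (gtn_eqF n_ge2).
rewrite (bigD1_seq 1%N) ?divisor1 ?divisors_uniq //= divn1 f1 mulr1.
move/eqP; rewrite addr_eq0 => /eqP ->; congr (- _).
rewrite big_seq_cond [RHS]big_seq_cond; apply: eq_bigl => d.
case: (boolP (d \in divisors n)) => //=; rewrite -dvdn_divisors // => /(dvdn_gt0 n_gt0).
by case: d => [|[|d]].
Qed.

Lemma norm_dirichlet_inv_le n : (0 < n)%N ->
  `|g n| <= (Hfact n)%:R * C ^+ primeOmega n * n%:R `^ gamma.
Proof.
elim/ltn_ind: n => n IH n_gt0; have [n_le1|n_ge2] := leqP n 1.
  have -> : n = 1%N by apply/eqP; rewrite eqn_leq n_le1.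
  by rewrite dirichlet_inv1 Hfact1 primeOmega1 powR1 normr1 !mulr1.
rewrite dirichlet_inv_rec // normrN Hfact_rec // natr_sum !mulr_suml.
apply: (le_trans (ler_norm_sum _ _ _)).
rewrite big_seq_cond [X in _ <= X]big_seq_cond; apply: ler_sum => d /andP [d_div d_gt1].
have [nE q_gt0 q_lt_n] := divisors_cofactor n_gt0 d_div d_gt1.
set q := (n %/ d)%N in nE q_gt0 q_lt_n *; rewrite -nE.
rewrite normrM primeOmegaM ?(ltnW d_gt1) // natrM powRM // exprD.
rewrite [_ * (C ^+ _ * _)]mulrA mulrACA.
by apply: ler_pM => //; [apply: IH | apply/norm_submul_le/ltnW].
Qed.

End SubmultiplicativeInverse.

Lemma zeta_partial_nondecreasing (R : realType) (s : R) :
  {homo zeta_partial s : m n / (m <= n)%N >-> m <= n}.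
Proof.
move=> m n m_le_n; rewrite /zeta_partial.
have [->|m_gt0] := posnP m.
  by rewrite big_geq // sumr_ge0 // => k _; apply: powR_ge0.
rewrite [X in _ <= X](big_cat_nat m_gt0 m_le_n) /= lerDl.
by rewrite sumr_ge0 // => k _; apply: powR_ge0.
Qed.

Section ZetaEqTwo.
Variables (R : realType) (rho : R).
Hypothesis zeta_rho : zeta_eq2 rho.

Lemma zeta_partial_le2 N : zeta_partial rho N <= 2.
Proof.
have zeta_cvg := zeta_rho; rewrite /zeta_eq2 in zeta_cvg.
have := nondecreasing_cvgn_le (@zeta_partial_nondecreasing R rho) (cvgP _ zeta_cvg) N.
by rewrite (norm_cvg_lim zeta_cvg).
Qed.

Lemma sum_divisors_powRN_le1 n : (0 < n)%N ->
  \sum_(d <- divisors n | (1 < d)%N) d%:R `^ (- rho) <= 1.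
Proof.
move=> n_gt0.
have := zeta_partial_le2 n.+1.
rewrite /zeta_partial big_ltn // powR1 (@big_nat_widenl _ _ _ 2 1) //= => zeta_le.
rewrite (big_uniq_index_iota _ _ _ _ _ (divisors_uniq n) (divisors_sub_iota n_gt0)).
rewrite big_mkcondl /=.
apply: (@le_trans _ _ (\sum_(1 <= k < n.+1 | (1 < k)%N) k%:R `^ (- rho))); last by lra.
by apply: ler_sum => k _; case: ifP => _; rewrite ?powR_ge0.
Qed.

Lemma Hfact_le_powR n : (0 < n)%N -> (Hfact n)%:R <= n%:R `^ rho.
Proof.
elim/ltn_ind: n => n IH n_gt0; have [n_le1|n_ge2] := leqP n 1.
  have -> : n = 1%N by apply/eqP; rewrite eqn_leq n_le1.
  by rewrite Hfact1 powR1.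
have n_pos : 0 < (n%:R : R) `^ rho by rewrite powR_gt0 // ltr0n.
rewrite Hfact_rec // natr_sum.
apply: (@le_trans _ _ (\sum_(d <- divisors n | (1 < d)%N) n%:R `^ rho * d%:R `^ (- rho))).
  rewrite big_seq_cond [X in _ <= X]big_seq_cond; apply: ler_sum => d /andP [d_div d_gt1].
  have [nE q_gt0 q_lt_n] := divisors_cofactor n_gt0 d_div d_gt1.
  set q := (n %/ d)%N in nE q_gt0 q_lt_n *; rewrite -nE natrM powRM // powRN.
  by rewrite mulfK ?IH // gt_eqF // powR_gt0 // ltr0n ltnW.
rewrite -mulr_sumr; apply: ler_piMr; [exact: ltW | exact: sum_divisors_powRN_le1].
Qed.

End ZetaEqTwo.

Theorem proposition3p1 (R : realType) (f finv : nat -> R) (C gamma rho : R)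
  (hf1 : f 1%N = 1)
  (hsub : forall m n : nat, (0 < m)%N -> (0 < n)%N ->
            `|f (m * n)%N| <= `|f m| * `|f n|)
  (hC : 0 < C)
  (hbound : forall n : nat, (2 <= n)%N -> `|f n| <= C * (n%:R `^ gamma))
  (hinv : is_dirichlet_inverse f finv)
  (hrho1 : 1 < rho)
  (hrho : zeta_eq2 rho) :
  forall n : nat, (2 <= n)%N ->
    `|finv n| <= (ordfact n)%:R * C ^+ primeOmega n * (n%:R `^ gamma) /\
    (ordfact n)%:R * C ^+ primeOmega n * (n%:R `^ gamma)
      <= C ^+ primeOmega n * (n%:R `^ (gamma + rho)).
Proof.
move=> n n_ge2; have n_gt0 := ltnW n_ge2; rewrite ordfactE //; split.
  have f_prime p : prime p -> `|f p| <= C * p%:R `^ gamma.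
    by move=> p_prime; apply: hbound; apply: prime_gt1.
  exact: norm_dirichlet_inv_le hf1 hsub f_prime (fun m m_gt0 => (hinv m m_gt0).2) n n_gt0.
rewrite powRD ?pnatr_eq0 -?lt0n ?n_gt0 ?implybT // mulrA.
rewrite -[X in X <= _]mulrA [X in X <= _]mulrC; apply: ler_wpM2l.
  by rewrite mulr_ge0 ?exprn_ge0 ?powR_ge0 ?ltW.
exact: Hfact_le_powR hrho n n_gt0.
Qed.
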